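(* Let $x,y\in\mathbb{H}^2$, let $e_1=(1,0)$, $e_2=(0,1)$, and define $$x'=\tfrac{x+y}{2}-\tfrac{|x-y|}{2}e_2,\quad y'=\tfrac{x+y}{2}+\tfrac{|x-y|}{2}e_2,\quad x''=\tfrac{x+y}{2}-\tfrac{|x-y|}{2}e_1,\quad y''=\tfrac{x+y}{2}+\tfrac{|x-y|}{2}e_1,$$ and assume $x'\in\mathbb{H}^2$ (so that $x',y',x'',y''\in\mathbb{H}^2$). Then $$\tilde\tau_{\mathbb{H}^2}(x'',y'')\le\tilde\tau_{\mathbb{H}^2}(x,y)\le\tilde\tau_{\mathbb{H}^2}(x',y').$$
   Context: $\mathbb{H}^2=\{(x_1,x_2)\in\mathbb{R}^2:x_2>0\}$ is the upper half plane. For a proper subdomain $D\subsetneq\mathbb{R}^n$ and $x,y\in D$, $\tilde\tau_D(x,y)=\log\big(1+\sup_{p\in\partial D}\frac{|x-y|}{\sqrt{|x-p||y-p|}}\big)$ (the scale invariant Cassinian metric). *)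

From Stdlib Require Import Reals Lra ClassicalEpsilon.
Open Scope R_scope.

Definition pt := (R * R)%type.

Definition padd (a b : pt) : pt := (fst a + fst b, snd a + snd b).
Definition psub (a b : pt) : pt := (fst a - fst b, snd a - snd b).
Definition pscale (c : R) (a : pt) : pt := (c * fst a, c * snd a).

Definition pnorm (a : pt) : R := sqrt (fst a ^ 2 + snd a ^ 2).
Definition pdist (a b : pt) : R := pnorm (psub a b).

Definition e1 : pt := (1, 0).
Definition e2 : pt := (0, 1).

Definition H2 (x : pt) : Prop := snd x > 0.

Definition boundary (D : pt -> Prop) (p : pt) : Prop :=
  forall eps, eps > 0 ->
    (exists q, D q /\ pdist p q < eps) /\ (exists q, ~ D q /\ pdist p q < eps).

(* Supremum of a set of reals (classical); meaningful when the set is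
   nonempty and bounded above, 0 otherwise. *)
Definition Rsup (E : R -> Prop) : R :=
  match excluded_middle_informative (bound E /\ exists x, E x) with
  | left H => proj1_sig (completeness E (proj1 H) (proj2 H))
  | right _ => 0
  end.

Definition tau_tilde (D : pt -> Prop) (x y : pt) : R :=
  ln (1 + Rsup (fun r => exists p, boundary D p /\
        r = pdist x y / sqrt (pdist x p * pdist y p))).

(* The boundary of the upper half plane is the real axis {(t,0)}, so for
   a, b in H2 the Cassinian metric is ln (1 + sup_t ratio a b t) with
     ratio a b t = |a-b| / sqrt (|a-(t,0)| |b-(t,0)|).
   Write h for the height of the midpoint of a, b and r = |a-b|/2.  The
   product of the squared distances of a, b to (t,0) has the closed form
   (Cassini identity) ((m-t)^2 + h^2 - r^2)^2 + 4 ((m-t) u2 - h u1)^2, with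
   m the abscissa of the midpoint and u = (a-b)/2.  From it we read off:
   - if r < h, every ratio is at most 2r / sqrt (h^2 - r^2), with equality
     at t = m for a vertical pair (x', y');
   - the ratio at t = m is at least 2r / sqrt (h^2 + r^2), and for a
     horizontal pair (x'', y'') every ratio is at most that value.
   The four pairs x, y / x', y' / x'', y'' share h and r, which gives
   tau(x'',y'') <= ln(1+2r/sqrt(h^2+r^2)) <= tau(x,y)
                <= ln(1+2r/sqrt(h^2-r^2)) <= tau(x',y'). *)

From Stdlib Require Import Reals Lra Psatz ClassicalEpsilon.
Open Scope R_scope.

Lemma Rsup_le (E : R -> Prop) K :
  (forall r, E r -> r <= K) -> 0 <= K -> Rsup E <= K.
Proof.
  intros HK H0. unfold Rsup.
  destruct (excluded_middle_informative _) as [H|H]; [|lra].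
  destruct (completeness E _ _) as [s [ub lub]]; simpl. apply lub. exact HK.
Qed.

Lemma Rsup_ge (E : R -> Prop) r K :
  E r -> (forall r, E r -> r <= K) -> r <= Rsup E.
Proof.
  intros Hr HK. unfold Rsup.
  destruct (excluded_middle_informative _) as [H|H].
  - destruct (completeness E _ _) as [s [ub lub]]; simpl. apply ub; exact Hr.
  - exfalso. apply H. split; [exists K; exact HK | exists r; exact Hr].
Qed.

Lemma ln_le_compat x y : 0 < x -> x <= y -> ln x <= ln y.
Proof.
  intros Hx Hxy. destruct (Rle_lt_or_eq_dec _ _ Hxy) as [Hlt|<-].
  - left. apply ln_increasing; assumption.
  - right. reflexivity.
Qed.

Lemma pdist_sq (a b : pt) :
  pdist a b ^ 2 = (fst a - fst b) ^ 2 + (snd a - snd b) ^ 2.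
Proof.
  unfold pdist, pnorm, psub; simpl.
  apply pow2_sqrt, Rplus_le_le_0_compat; apply pow2_ge_0.
Qed.

Lemma pdist_nonneg (a b : pt) : 0 <= pdist a b.
Proof. apply sqrt_pos. Qed.

Lemma dist_snd (p q : pt) : Rabs (snd p - snd q) <= pdist p q.
Proof.
  unfold pdist, pnorm, psub; simpl.
  rewrite <- sqrt_Rsqr_abs. apply sqrt_le_1_alt.
  unfold Rsqr. pose proof (pow2_ge_0 (fst p - fst q)). nra.
Qed.

Lemma boundary_H2 (p : pt) : boundary H2 p <-> snd p = 0.
Proof.
  split.
  - intros Hb. destruct (Rtotal_order (snd p) 0) as [Hn|[Hz|Hp]]; [|exact Hz|].
    + destruct (Hb (- snd p)) as [[q [Hq Hd]] _]; [lra|].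
      pose proof (dist_snd p q) as Hgap. unfold H2 in Hq.
      rewrite Rabs_left in Hgap; lra.
    + destruct (Hb (snd p)) as [_ [q [Hq Hd]]]; [lra|].
      pose proof (dist_snd p q) as Hgap. unfold H2 in Hq.
      pose proof (Rle_abs (snd p - snd q)). lra.
  - destruct p as [p1 p2]; simpl; intros -> eps He.
    assert (Hclose : forall s, pdist (p1, 0) (p1, s) = Rabs s).
    { intros s. unfold pdist, pnorm, psub; simpl.
      rewrite <- sqrt_Rsqr_abs. f_equal. unfold Rsqr. ring. }
    split.
    + exists (p1, eps / 2). unfold H2; simpl. rewrite Hclose, Rabs_right; lra.
    + exists (p1, - (eps / 2)). unfold H2; simpl.
      rewrite Hclose, Rabs_Ropp, Rabs_right; lra.
Qed.

Definition ratio (a b : pt) (t : R) : R :=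
  pdist a b / sqrt (pdist a (t, 0) * pdist b (t, 0)).

Lemma cassinian_set_H2 (a b : pt) r :
  (exists p, boundary H2 p /\ r = pdist a b / sqrt (pdist a p * pdist b p)) <->
  exists t, r = ratio a b t.
Proof.
  split.
  - intros [[p1 p2] [Hb Hr]]. apply boundary_H2 in Hb; simpl in Hb; subst p2.
    exists p1; exact Hr.
  - intros [t Ht]. exists (t, 0). split; [apply boundary_H2; reflexivity | exact Ht].
Qed.

(* Every ratio is nonnegative (division by zero yields zero in Stdlib). *)
Lemma ratio_nonneg (a b : pt) t : 0 <= ratio a b t.
Proof.
  unfold ratio, Rdiv. apply Rmult_le_pos; [apply pdist_nonneg|].
  destruct (Rle_lt_or_eq_dec _ _ (sqrt_pos (pdist a (t, 0) * pdist b (t, 0))))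
    as [Hpos|<-].
  - left. apply Rinv_0_lt_compat, Hpos.
  - rewrite Rinv_0. right. reflexivity.
Qed.

Section MetricOfRatios.
Variables a b : pt.

Let S : R -> Prop :=
  fun r => exists p, boundary H2 p /\ r = pdist a b / sqrt (pdist a p * pdist b p).

Lemma cassinian_set_bound K : (forall t, ratio a b t <= K) -> forall r, S r -> r <= K.
Proof.
  intros Hbound r Hr. apply cassinian_set_H2 in Hr. destruct Hr as [t ->]. apply Hbound.
Qed.

Lemma cassinian_set_ratio t : S (ratio a b t).
Proof. apply cassinian_set_H2. exists t. reflexivity. Qed.

Lemma tau_H2_le K : (forall t, ratio a b t <= K) -> tau_tilde H2 a b <= ln (1 + K).
Proof.
  intros Hbound. unfold tau_tilde. fold S.
  pose proof (Rsup_ge S _ K (cassinian_set_ratio 0) (cassinian_set_bound K Hbound)).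
  pose proof (ratio_nonneg a b 0).
  assert (HK : 0 <= K) by (pose proof (Hbound 0); lra).
  pose proof (Rsup_le S K (cassinian_set_bound K Hbound) HK).
  apply ln_le_compat; lra.
Qed.

Lemma tau_H2_ge K K' t0 :
  0 <= K -> K <= ratio a b t0 -> (forall t, ratio a b t <= K') ->
  ln (1 + K) <= tau_tilde H2 a b.
Proof.
  intros HK Ht0 Hbound. unfold tau_tilde. fold S.
  pose proof (Rsup_ge S _ K' (cassinian_set_ratio t0) (cassinian_set_bound K' Hbound)).
  apply ln_le_compat; lra.
Qed.

End MetricOfRatios.

Definition foot_product (a b : pt) (t : R) : R :=
  ((fst a - t) ^ 2 + snd a ^ 2) * ((fst b - t) ^ 2 + snd b ^ 2).

Lemma foot_product_spec (a b : pt) t :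
  (pdist a (t, 0) * pdist b (t, 0)) ^ 2 = foot_product a b t.
Proof.
  unfold foot_product. rewrite Rpow_mult_distr, !pdist_sq; simpl. ring.
Qed.

Lemma div_sqrt_antitone d x y : 0 <= d -> 0 < x -> x <= y -> d / sqrt y <= d / sqrt x.
Proof.
  intros Hd Hx Hxy. unfold Rdiv. apply Rmult_le_compat_l; [exact Hd|].
  apply Rinv_le_contravar; [apply sqrt_lt_R0, Hx | apply sqrt_le_1_alt, Hxy].
Qed.

Lemma ratio_le_of_foot_product (a b : pt) t L :
  0 < L -> L ^ 2 <= foot_product a b t -> ratio a b t <= pdist a b / sqrt L.
Proof.
  intros HL Hfoot. rewrite <- foot_product_spec in Hfoot.
  pose proof (Rmult_le_pos _ _ (pdist_nonneg a (t, 0)) (pdist_nonneg b (t, 0))).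
  apply div_sqrt_antitone; [apply pdist_nonneg | exact HL | nra].
Qed.

Lemma ratio_ge_of_foot_product (a b : pt) t L :
  0 < foot_product a b t -> foot_product a b t <= L ^ 2 -> 0 <= L ->
  pdist a b / sqrt L <= ratio a b t.
Proof.
  intros Hpos Hfoot HL. rewrite <- foot_product_spec in Hpos, Hfoot.
  pose proof (Rmult_le_pos _ _ (pdist_nonneg a (t, 0)) (pdist_nonneg b (t, 0))).
  apply div_sqrt_antitone; [apply pdist_nonneg | nra | nra].
Qed.

Lemma cassini_identity (a b : pt) t :
  let m := (fst a + fst b) / 2 in let h := (snd a + snd b) / 2 in
  let u1 := (fst a - fst b) / 2 in let u2 := (snd a - snd b) / 2 in
  foot_product a b t =
  ((m - t) ^ 2 + h ^ 2 - (u1 ^ 2 + u2 ^ 2)) ^ 2 + 4 * ((m - t) * u2 - h * u1) ^ 2.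
Proof. unfold foot_product; simpl. field. Qed.

Lemma half_distance_sq (a b : pt) r :
  pdist a b = 2 * r -> r ^ 2 = ((fst a - fst b) / 2) ^ 2 + ((snd a - snd b) / 2) ^ 2.
Proof.
  intros Hr. pose proof (pdist_sq a b) as Hsq. rewrite Hr in Hsq. nra.
Qed.

Section PairAtHeight.
Variables (a b : pt) (h r : R).
Hypothesis mid_height : (snd a + snd b) / 2 = h.
Hypothesis half_dist : pdist a b = 2 * r.

Lemma ratio_le_deep : 0 <= r < h -> forall t, ratio a b t <= 2 * r / sqrt (h ^ 2 - r ^ 2).
Proof.
  intros Hrh t. rewrite <- half_dist. apply ratio_le_of_foot_product; [nra|].
  rewrite cassini_identity, <- (half_distance_sq a b r half_dist); cbv zeta.
  rewrite mid_height.
  set (w := (fst a + fst b) / 2 - t). set (c := w * _ - h * _).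
  clearbody w c.
  assert (0 <= h ^ 2 - r ^ 2) by nra.
  pose proof (pow2_ge_0 w). pose proof (pow2_ge_0 c).
  nra.
Qed.

Lemma ratio_ge_at_midfoot :
  0 < snd a -> 0 < snd b ->
  2 * r / sqrt (h ^ 2 + r ^ 2) <= ratio a b ((fst a + fst b) / 2).
Proof.
  intros Ha Hb. rewrite <- half_dist. apply ratio_ge_of_foot_product; [| | nra].
  - unfold foot_product.
    pose proof (pow2_ge_0 (fst a - (fst a + fst b) / 2)).
    pose proof (pow2_ge_0 (fst b - (fst a + fst b) / 2)).
    apply Rmult_lt_0_compat; nra.
  - rewrite cassini_identity, (half_distance_sq a b r half_dist); cbv zeta.
    rewrite mid_height, Rminus_diag.
    set (u1 := (fst a - fst b) / 2). set (u2 := (snd a - snd b) / 2).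
    pose proof (pow2_ge_0 (h * u2)). nra.
Qed.

Lemma ratio_le_horizontal :
  snd a = snd b -> 0 <= r < h ->
  forall t, ratio a b t <= 2 * r / sqrt (h ^ 2 + r ^ 2).
Proof.
  intros Hlevel Hrh t. rewrite <- half_dist. apply ratio_le_of_foot_product; [nra|].
  pose proof (half_distance_sq a b r half_dist) as Hr2.
  assert (Hu2 : (snd a - snd b) / 2 = 0) by (rewrite Hlevel; field).
  rewrite cassini_identity; cbv zeta. rewrite mid_height, Hu2 in *.
  set (w := (fst a + fst b) / 2 - t) in *. set (u1 := (fst a - fst b) / 2) in *.
  clearbody w u1.
  assert (Hc : (w * 0 - h * u1) ^ 2 = h ^ 2 * r ^ 2) by (rewrite Hr2; ring).
  rewrite Hc, <- Hr2.
  assert (0 <= h ^ 2 - r ^ 2) by nra.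
  pose proof (pow2_ge_0 w). nra.
Qed.

Lemma ratio_ge_vertical :
  fst a = fst b -> 0 <= r < h ->
  2 * r / sqrt (h ^ 2 - r ^ 2) <= ratio a b (fst a).
Proof.
  intros Hplumb Hrh. rewrite <- half_dist.
  assert (Hfoot : foot_product a b (fst a) = (h ^ 2 - r ^ 2) ^ 2).
  { rewrite cassini_identity, <- (half_distance_sq a b r half_dist); cbv zeta.
    rewrite mid_height, <- Hplumb. field. }
  assert (Hgap : 0 < h ^ 2 - r ^ 2) by nra.
  apply ratio_ge_of_foot_product; rewrite ?Hfoot; [apply pow_lt | reflexivity | ]; lra.
Qed.

End PairAtHeight.

Lemma mid_height_centered (m w : pt) : (snd (psub m w) + snd (padd m w)) / 2 = snd m.
Proof. simpl. field. Qed.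

Lemma pdist_centered (m w : pt) : pdist (psub m w) (padd m w) = 2 * pnorm w.
Proof.
  unfold pdist, pnorm, psub, padd; cbn [fst snd].
  replace ((fst m - fst w - (fst m + fst w)) ^ 2 + (snd m - snd w - (snd m + snd w)) ^ 2)
    with (2 ^ 2 * (fst w ^ 2 + snd w ^ 2)) by ring.
  rewrite sqrt_mult, sqrt_pow2; [reflexivity | lra | apply pow2_ge_0 |].
  apply Rplus_le_le_0_compat; apply pow2_ge_0.
Qed.

Lemma pnorm_scale_unit (c : R) (e : pt) :
  0 <= c -> e = e1 \/ e = e2 -> pnorm (pscale c e) = c.
Proof.
  intros Hc [-> | ->]; unfold pnorm, pscale, e1, e2; cbn [fst snd];
    replace (_ + _) with (c ^ 2) by ring; apply sqrt_pow2, Hc.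
Qed.

Lemma div_sqrt_nonneg d x : 0 <= d -> 0 < x -> 0 <= d / sqrt x.
Proof.
  intros Hd Hx. unfold Rdiv. apply Rmult_le_pos; [exact Hd|].
  left. apply Rinv_0_lt_compat, sqrt_lt_R0, Hx.
Qed.

Theorem lemma3p11 (x y : pt) (hx : H2 x) (hy : H2 y)
  (hx' : H2 (psub (pscale (1/2) (padd x y)) (pscale (pdist x y / 2) e2))) :
  let m := pscale (1/2) (padd x y) in
  let x' := psub m (pscale (pdist x y / 2) e2) in
  let y' := padd m (pscale (pdist x y / 2) e2) in
  let x'' := psub m (pscale (pdist x y / 2) e1) in
  let y'' := padd m (pscale (pdist x y / 2) e1) in
  tau_tilde H2 x'' y'' <= tau_tilde H2 x y /\ tau_tilde H2 x y <= tau_tilde H2 x' y'.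
Proof.
  intros m x' y' x'' y''.
  set (r := pdist x y / 2). set (h := snd m).
  assert (Hrh : 0 <= r < h).
  { pose proof (pdist_nonneg x y). unfold H2, psub, pscale, e2 in hx'; simpl in hx'.
    unfold h, m, r; simpl. lra. }
  assert (Hxy : pdist x y = 2 * r) by (unfold r; field).
  assert (Hh : (snd x + snd y) / 2 = h) by (unfold h, m; simpl; field).
  assert (Hr'' : pdist x'' y'' = 2 * r).
  { unfold x'', y''. rewrite pdist_centered, pnorm_scale_unit; auto; lra. }
  assert (Hr' : pdist x' y' = 2 * r).
  { unfold x', y'. rewrite pdist_centered, pnorm_scale_unit; auto; lra. }
  assert (Hh'' := mid_height_centered m (pscale r e1)).
  assert (Hh' := mid_height_centered m (pscale r e2)).
  assert (Hlevel : snd x'' = snd y'') by (unfold x'', y''; simpl; ring).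
  assert (Hplumb : fst x' = fst y') by (unfold x', y'; simpl; ring).
  split.
  - apply Rle_trans with (ln (1 + 2 * r / sqrt (h ^ 2 + r ^ 2))).
    + apply tau_H2_le, (ratio_le_horizontal x'' y'' h r); assumption.
    + apply (tau_H2_ge x y _ (2 * r / sqrt (h ^ 2 - r ^ 2)) ((fst x + fst y) / 2)).
      * apply div_sqrt_nonneg; nra.
      * apply ratio_ge_at_midfoot; assumption.
      * apply ratio_le_deep; assumption.
  - apply Rle_trans with (ln (1 + 2 * r / sqrt (h ^ 2 - r ^ 2))).
    + apply tau_H2_le, ratio_le_deep; assumption.
    + apply (tau_H2_ge x' y' _ (2 * r / sqrt (h ^ 2 - r ^ 2)) (fst x')).
      * apply div_sqrt_nonneg; nra.
      * apply ratio_ge_vertical; assumption.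
      * apply ratio_le_deep; assumption.
Qed.
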